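(* Let $\phi$ be a Drinfeld $A[\underline{t}_s]$-module over $\mathbb{T}_s$ of rank $r$ with $\phi_\theta=\theta+A_1\tau+\dots+A_r\tau^r$, $A_r\in\mathbb{T}_s^\times$. Then the de Rham module $H^*_{\mathrm{DR}}(\phi)=\mathrm{Der}(\phi)/\mathrm{Der}_{si}(\phi)$ is a free $\mathbb{T}_s$-module of rank $r$, with basis the classes of $\delta^0,\delta^1,\dots,\delta^{r-1}$, where $\delta^0_a=\phi_a-a$ for $a\in A[\underline{t}_s]$ and, for $1\le i\le r-1$, $\delta^i$ is the biderivation determined by $\delta^i_\theta=\tau^i$.
   Context: $\mathbb{F}_q$ finite field, $\theta,t_1,\dots,t_s$ independent variables, $A[\underline{t}_s]=\mathbb{F}_q[\theta,t_1,\dots,t_s]$, $\mathbb{F}_q[\underline{t}_s]=\mathbb{F}_q[t_1,\dots,t_s]$. $\mathbb{C}_\infty$: completion of an algebraic closure of $\mathbb{F}_q((1/\theta))$. $\mathbb{T}_s$: Tate algebra of power series in $t_1,\dots,t_s$ over $\mathbb{C}_\infty$ with coefficients tending to $0$. $\tau$ raises coefficients to the $q$-th power, $f^{(n)}=\tau^n(f)$; $\mathbb{T}_s[\tau]$ is the twisted polynomial ring with $\tau f=f^{(1)}\tau$. A Drinfeld $A[\underline{t}_s]$-module of rank $r$ is an $\mathbb{F}_q[\underline{t}_s]$-algebra homomorphism $\phi:A[\underline{t}_s]\to\mathbb{T}_s[\tau]$ with $\phi_\theta=\theta+A_1\tau+\dots+A_r\tau^r$, $A_r\ne0$. A biderivation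 is an $\mathbb{F}_q[\underline{t}_s]$-linear $\eta:A[\underline{t}_s]\to\tau\mathbb{T}_s[\tau]$ with $\eta_{ab}=a\eta_b+\eta_a\phi_b$ for all $a,b$; a biderivation is determined by $\eta_\theta$, and every element of $\tau\mathbb{T}_s[\tau]$ occurs as $\eta_\theta$. $\mathrm{Der}(\phi)$ is the left $\mathbb{T}_s$-module of biderivations, $(f\eta)_a=f\eta_a$. For $m\in\tau\mathbb{T}_s[\tau]$, $\eta^{\{m\}}_a=m\phi_a-am$ defines a strictly inner biderivation; $\mathrm{Der}_{si}(\phi)$ is the submodule of these. (Note $\delta^0=\eta^{\{1\}}$ is a biderivation but with $1\notin\tau\mathbb{T}_s[\tau]$.) *)

From mathcomp Require Import all_boot all_order all_algebra.
Set Implicit Arguments. Unset Strict Implicit. Unset Printing Implicit Defensive.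
Import GRing.Theory.
Local Open Scope ring_scope.

(* Twisted polynomials T[tau] are represented by their coefficient
   polynomial p = \sum_i p_i X^i  <->  \sum_i p_i tau^i.
   sigma plays the role of tau acting on coefficients (f^(1) = sigma f). *)

(* twisted multiplication: (p_i tau^i)(q_j tau^j) = p_i q_j^(i) tau^(i+j) *)
Definition tmul (T : comRingType) (sigma : T -> T) (p q : {poly T}) : {poly T} :=
  \sum_(i < size p) \sum_(j < size q)
     (p`_i * iter i sigma q`_j) *: 'X^(i + j).

Fixpoint tpow (T : comRingType) (sigma : T -> T) (p : {poly T}) (k : nat)
  : {poly T} :=
  match k with
  | 0 => 1
  | k'.+1 => tmul sigma (tpow sigma p k') p
  end.

(* A[t_s] = K[theta] with K = F_q[t_s]; an element a : {poly K} is a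
   polynomial in theta.  evalA a = image of a in T (a evaluated at theta). *)
Definition evalA (K : comRingType) (T : comRingType) (iota : K -> T)
  (theta : T) (a : {poly K}) : T := (map_poly iota a).[theta].

(* The Drinfeld module phi: the K-algebra map A[t_s] -> T[tau] with
   phi_theta = Phi. *)
Definition phi (K : comRingType) (T : comRingType) (iota : K -> T)
  (sigma : T -> T) (Phi : {poly T}) (a : {poly K}) : {poly T} :=
  \sum_(k < size a) tmul sigma (iota a`_k)%:P (tpow sigma Phi k).

Definition is_bider (K : comRingType) (T : comRingType) (iota : K -> T)
  (sigma : T -> T) (theta : T) (Phi : {poly T})
  (eta : {poly K} -> {poly T}) : Prop :=
  [/\ (forall a b, eta (a + b) = eta a + eta b),
      (forall (c : K) a, eta (c *: a) = tmul sigma (iota c)%:P (eta a)),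
      (forall a, (eta a)`_0 = 0) &
      (forall a b, eta (a * b) =
          tmul sigma (evalA iota theta a)%:P (eta b)
          + tmul sigma (eta a) (phi iota sigma Phi b))].

Definition is_strictly_inner (K : comRingType) (T : comRingType)
  (iota : K -> T) (sigma : T -> T) (theta : T) (Phi : {poly T})
  (eta : {poly K} -> {poly T}) : Prop :=
  exists m : {poly T}, m`_0 = 0 /\
    forall a, eta a = tmul sigma m (phi iota sigma Phi a)
                      - tmul sigma (evalA iota theta a)%:P m.

(* A biderivation eta is determined by eta_theta, an arbitrary element of
   tau T[tau], and the strictly inner biderivation eta^{m} has
   eta^{m}_theta = m phi_theta - theta m.  As the leading coefficient A_r of
   phi_theta is a unit, so are its twists, and m |-> m phi_theta - theta m
   raises the tau-degree of m <> 0 by exactly r.  Euclidean division therefore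
   brings every element of tau T[tau] to a remainder of tau-degree at most r,
   i.e. a T-combination of delta^0_theta = phi_theta - theta and the tau^i,
   0 < i < r; and such a combination is a value m phi_theta - theta m only for
   m = 0, which forces all its coefficients to vanish. *)

From HB Require Import structures.
From mathcomp Require Import all_boot all_order all_algebra.
From mathcomp Require Import ring zify.
Set Implicit Arguments.
Unset Strict Implicit.
Unset Printing Implicit Defensive.

Import GRing.Theory.
Local Open Scope ring_scope.

Section Twist.
Variables (T : comRingType) (sigma : {rmorphism T -> T}).

Definition twist (n : nat) : T -> T := iter n sigma.

Lemma twist_is_zmod_morphism n : zmod_morphism (twist n).
Proof. by elim: n => [|n IHn] x y //=; rewrite IHn rmorphB. Qed.
HB.instance Definition _ n :=
  GRing.isZmodMorphism.Build T T (twist n) (twist_is_zmod_morphism n).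

Lemma twist_is_monoid_morphism n : monoid_morphism (twist n).
Proof.
elim: n => [|n [IH1 IHM]] //; split=> [|x y] /=; rewrite /twist /= -/(twist n).
  by rewrite IH1 rmorph1.
by rewrite IHM rmorphM.
Qed.
HB.instance Definition _ n :=
  GRing.isMonoidMorphism.Build T T (twist n) (twist_is_monoid_morphism n).

Lemma twistD m n x : twist (m + n) x = twist m (twist n x).
Proof. exact: iterD. Qed.

Lemma twist_fix c : sigma c = c -> forall n, twist n c = c.
Proof. by move=> sc; elim=> //= n IHn; rewrite /twist /= -/(twist n) IHn sc. Qed.

End Twist.

Lemma twist_unit (T : comUnitRingType) (sigma : {rmorphism T -> T}) n x :
  x \is a GRing.unit -> twist sigma n x \is a GRing.unit.
Proof.
case/unitrP=> y [yx xy]; apply/unitrP; exists (twist sigma n y).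
by rewrite -!rmorphM /= yx xy rmorph1.
Qed.

Section TwistedPolynomials.
Variables (T : comRingType) (sigma : {rmorphism T -> T}).
Local Notation tm := (tmul sigma).
Local Notation twistp n q := (map_poly (twist sigma n) q).

Lemma tmulE p q : tm p q = \sum_(i < size p) p`_i *: ('X^i * twistp i q).
Proof.
apply: eq_bigr => i _; rewrite /map_poly poly_def mulr_sumr scaler_sumr.
by apply: eq_bigr => j _; rewrite -scalerAr scalerA exprD.
Qed.

Lemma tmul_wide n (p q : {poly T}) : (size p <= n)%N ->
  tm p q = \sum_(i < n) p`_i *: ('X^i * twistp i q).
Proof.
move=> le_p_n; rewrite tmulE (big_ord_widen n (fun i => p`_i *: ('X^i * twistp i q)) le_p_n).
rewrite big_mkcond; apply: eq_bigr => i _; case: ifP => // /negbT.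
by rewrite -leqNgt => ?; rewrite nth_default // scale0r.
Qed.

Lemma tmulDl p p' q : tm (p + p') q = tm p q + tm p' q.
Proof.
pose n := maxn (size p) (size p').
rewrite !(@tmul_wide n) ?leq_maxl ?leq_maxr ?(leq_trans (size_polyD _ _)) //.
by rewrite -big_split; apply: eq_bigr => i _; rewrite coefD scalerDl.
Qed.

Lemma tmulZl c p q : tm (c *: p) q = c *: tm p q.
Proof.
rewrite (@tmul_wide (size p) (c *: p)) ?size_scale_leq // tmulE scaler_sumr.
by apply: eq_bigr => i _; rewrite coefZ scalerA.
Qed.

Lemma tmul0l q : tm 0 q = 0.
Proof. by have := tmulZl 0 0 q; rewrite !scale0r. Qed.

Lemma tmulNl p q : tm (- p) q = - tm p q.
Proof. by rewrite -scaleN1r tmulZl scaleN1r. Qed.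

Lemma tmulBl p p' q : tm (p - p') q = tm p q - tm p' q.
Proof. by rewrite tmulDl tmulNl. Qed.

Lemma tmul_suml (I : Type) (s : seq I) (P : pred I) (F : I -> {poly T}) q :
  tm (\sum_(i <- s | P i) F i) q = \sum_(i <- s | P i) tm (F i) q.
Proof. exact: (big_morph (tm ^~ q) (fun p p' => tmulDl p p' q) (tmul0l q)). Qed.

Lemma tmulDr p q q' : tm p (q + q') = tm p q + tm p q'.
Proof.
by rewrite !tmulE -big_split; apply: eq_bigr => i _; rewrite rmorphD mulrDr scalerDr.
Qed.

Lemma tmul0r p : tm p 0 = 0.
Proof. by rewrite tmulE big1 // => i _; rewrite rmorph0 mulr0 scaler0. Qed.

Lemma tmul_sumr (I : Type) (s : seq I) (P : pred I) (F : I -> {poly T}) p :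
  tm p (\sum_(i <- s | P i) F i) = \sum_(i <- s | P i) tm p (F i).
Proof. exact: (big_morph (tm p) (tmulDr p) (tmul0r p)). Qed.

Lemma tmulZr_fix c p q : sigma c = c -> tm p (c *: q) = c *: tm p q.
Proof.
move=> sc; rewrite !tmulE scaler_sumr; apply: eq_bigr => i _.
by rewrite map_polyZ /= twist_fix // -scalerAr !scalerA mulrC.
Qed.

Lemma tmulCl c q : tm c%:P q = c *: q.
Proof.
rewrite (@tmul_wide 1) ?size_polyC_leq1 // big_ord1 coefC mul1r.
by congr (_ *: _); apply/polyP => j; rewrite coef_map.
Qed.

Lemma tmul1l q : tm 1 q = q.
Proof. by rewrite -polyC1 tmulCl scale1r. Qed.

Lemma tmul1r p : tm p 1 = p.
Proof.
rewrite tmulE -[RHS]coefK poly_def; apply: eq_bigr => i _.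
by rewrite rmorph1 mulr1.
Qed.

Lemma tmul_monomial a b i j :
  tm (a *: 'X^i) (b *: 'X^j) = (a * twist sigma i b) *: 'X^(i + j).
Proof.
rewrite (@tmul_wide i.+1) ?(leq_trans (size_scale_leq _ _)) ?size_polyXn //.
rewrite big_ord_recr big1 /= => [|k _]; last first.
  by rewrite coefZ coefXn (ltn_eqF (ltn_ord k)) mulr0 scale0r.
by rewrite add0r coefZ coefXn eqxx mulr1 map_polyZ map_polyXn -scalerAr scalerA exprD.
Qed.

Lemma tmulA p q s : tm (tm p q) s = tm p (tm q s).
Proof.
have monomialE (u : {poly T}) : u = \sum_(i < size u) u`_i *: 'X^i.
  by rewrite -poly_def coefK.
have assoc_monomials a i b j : tm (tm (a *: 'X^i) (b *: 'X^j)) s = tm (a *: 'X^i) (tm (b *: 'X^j) s).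
  rewrite [s]monomialE [tm (b *: 'X^j) _]tmul_sumr [RHS]tmul_sumr [LHS]tmul_sumr.
  by apply: eq_bigr => k _; rewrite !tmul_monomial addnA rmorphM /= mulrA twistD.
have assoc_monomial_l a i : tm (tm (a *: 'X^i) q) s = tm (a *: 'X^i) (tm q s).
  rewrite [q]monomialE [tm (a *: 'X^i) (\sum_(j < size q) _)]tmul_sumr [LHS]tmul_suml.
  rewrite [tm (\sum_(j < size q) _) s]tmul_suml [RHS]tmul_sumr.
  by apply: eq_bigr => j _; rewrite assoc_monomials.
rewrite [p]monomialE [tm (\sum_(i < size p) _) q]tmul_suml.
rewrite [tm (\sum_(i < size p) _) s]tmul_suml [tm (\sum_(i < size p) _) (tm q s)]tmul_suml.
by apply: eq_bigr => i _; rewrite assoc_monomial_l.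
Qed.

Lemma coef_tmul_wide n (p q : {poly T}) k : (size p <= n)%N ->
  (tm p q)`_k = \sum_(i < n) p`_i * (if (k < i)%N then 0 else twist sigma i q`_(k - i)).
Proof.
move=> le_p_n; rewrite (tmul_wide q le_p_n) coef_sum; apply: eq_bigr => i _.
by rewrite coefZ coefXnM coef_map.
Qed.

Lemma coef0_tmul p q : (tm p q)`_0 = p`_0 * q`_0.
Proof.
rewrite (@coef_tmul_wide (size p).+1) // big_ord_recl big1 ?addr0 //.
by move=> i _; rewrite mulr0.
Qed.

Lemma coef_tmul_top (p q : {poly T}) k l n : (size p <= k.+1)%N -> (size q <= l.+1)%N ->
  (k + l <= n)%N -> (tm p q)`_n = p`_k * twist sigma k q`_(n - k).
Proof.
move=> sp sq le_n.
rewrite (@coef_tmul_wide k.+1) // big_ord_recr /= ltnNge (leq_trans (leq_addr l k) le_n).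
rewrite big1 ?add0r // => i _.
have ltik : (i < k)%N := ltn_ord i.
case: ifP => _; first by rewrite mulr0.
by rewrite [q`__]nth_default ?rmorph0 ?mulr0 //; apply: leq_trans sq _; lia.
Qed.

End TwistedPolynomials.

Section DrinfeldModule.
Variables (K T : comRingType) (iota : {rmorphism K -> T})
  (sigma : {rmorphism T -> T}) (theta : T) (Phi : {poly T}).
Hypothesis sigma_iota : forall c : K, sigma (iota c) = iota c.
Local Notation tm := (tmul sigma).
Local Notation ev := (evalA iota theta).
Local Notation ph := (phi iota sigma Phi).

Lemma evalAC c : ev c%:P = iota c.
Proof. by rewrite /evalA map_polyC hornerC. Qed.

Lemma evalA1 : ev 1 = 1.
Proof. by rewrite -polyC1 evalAC rmorph1. Qed.

Lemma evalAX : ev 'X = theta.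
Proof. by rewrite /evalA map_polyX hornerX. Qed.

Lemma evalAD a b : ev (a + b) = ev a + ev b.
Proof. by rewrite /evalA rmorphD hornerD. Qed.

Lemma evalAM a b : ev (a * b) = ev a * ev b.
Proof. by rewrite /evalA rmorphM hornerM. Qed.

Lemma evalAZ c a : ev (c *: a) = iota c * ev a.
Proof. by rewrite -mul_polyC evalAM evalAC. Qed.

Lemma phiE (a : {poly K}) : ph a = \sum_(k < size a) iota a`_k *: tpow sigma Phi k.
Proof. by apply: eq_bigr => k _; rewrite tmulCl. Qed.

Lemma phi_wide n (a : {poly K}) : (size a <= n)%N ->
  ph a = \sum_(k < n) iota a`_k *: tpow sigma Phi k.
Proof.
move=> le_a_n; rewrite phiE (big_ord_widen n (fun k => iota a`_k *: tpow sigma Phi k) le_a_n).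
rewrite big_mkcond; apply: eq_bigr => k _; case: ifP => // /negbT.
by rewrite -leqNgt => ?; rewrite nth_default // rmorph0 scale0r.
Qed.

Lemma phiD a b : ph (a + b) = ph a + ph b.
Proof.
pose n := maxn (size a) (size b).
rewrite !(@phi_wide n) ?leq_maxl ?leq_maxr ?(leq_trans (size_polyD _ _)) //.
by rewrite -big_split; apply: eq_bigr => k _; rewrite coefD rmorphD scalerDl.
Qed.

Lemma phiZ c a : ph (c *: a) = iota c *: ph a.
Proof.
rewrite (@phi_wide (size a) (c *: a)) ?size_scale_leq // phiE scaler_sumr.
by apply: eq_bigr => k _; rewrite coefZ rmorphM scalerA.
Qed.

Lemma phiC c : ph c%:P = (iota c)%:P.
Proof. by rewrite (@phi_wide 1) ?size_polyC_leq1 // big_ord1 coefC -mul_polyC mulr1. Qed.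

Lemma phi1 : ph 1 = 1.
Proof. by rewrite -polyC1 phiC rmorph1. Qed.

Lemma phiX : ph 'X = Phi.
Proof.
rewrite phiE size_polyX big_ord_recr big_ord1 /= !coefX /= rmorph0 rmorph1.
by rewrite scale0r add0r scale1r tmul1l.
Qed.

Lemma phiMX a : ph (a * 'X) = tm (ph a) Phi.
Proof.
rewrite (@phi_wide (size a).+1); last first.
  by apply: leq_trans (size_polyMleq _ _) _; rewrite size_polyX addn2.
rewrite big_ord_recl coefMX /= rmorph0 scale0r add0r phiE tmul_suml.
by apply: eq_bigr => k _; rewrite coefMX /= tmulZl.
Qed.

Lemma phiM a b : ph (a * b) = tm (ph a) (ph b).
Proof.
have tmul_iotar p c : tm p (iota c)%:P = iota c *: p.
  by rewrite -[(iota c)%:P]mulr1 mul_polyC tmulZr_fix // tmul1r.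
elim/poly_ind: b => [|b c IHb]; first by rewrite mulr0 /phi size_poly0 !big_ord0 tmul0r.
rewrite mulrDr mulrA -[a * c%:P]mulrC mul_polyC phiD phiMX IHb phiZ.
by rewrite phiD phiMX phiC tmulDr tmulA tmul_iotar.
Qed.

Hypothesis Phi0 : Phi`_0 = theta.

Lemma coef0_phi a : (ph a)`_0 = ev a.
Proof.
have coef0_tpow k : (tpow sigma Phi k)`_0 = theta ^+ k.
  by elim: k => [|k IHk] /=; rewrite ?coef1 // coef0_tmul IHk Phi0 exprSr.
rewrite phiE /evalA (@horner_coef_wide _ (size a)) ?size_poly // coef_sum.
by apply: eq_bigr => k _; rewrite coefZ coef0_tpow coef_map.
Qed.

End DrinfeldModule.

Section Biderivations.
Variables (K T : comRingType) (iota : {rmorphism K -> T})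
  (sigma : {rmorphism T -> T}) (theta : T) (Phi : {poly T}).
Hypothesis sigma_iota : forall c : K, sigma (iota c) = iota c.
Hypothesis Phi0 : Phi`_0 = theta.
Local Notation tm := (tmul sigma).
Local Notation ev := (evalA iota theta).
Local Notation ph := (phi iota sigma Phi).
Local Notation bider := (is_bider iota sigma theta Phi).

Lemma bider_ext f g : f =1 g -> bider f -> bider g.
Proof.
move=> fg [fD fZ f0 fM]; split=> [a b|c a|a|a b]; rewrite -!fg.
- exact: fD. - exact: fZ. - exact: f0. - exact: fM.
Qed.

Lemma bider_sub f g : bider f -> bider g -> bider (fun a => f a - g a).
Proof.
move=> [fD fZ f0 fM] [gD gZ g0 gM]; split=> [a b|c a|a|a b].
- by rewrite fD gD opprD addrACA.
- by rewrite fZ gZ !tmulCl scalerBr.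
- by rewrite coefB f0 g0 subr0.
- by rewrite fM gM !tmulCl tmulBl scalerBr opprD addrACA.
Qed.

Lemma bider_scale c f : bider f -> bider (fun a => tm c%:P (f a)).
Proof.
move=> [fD fZ f0 fM]; split=> [a b|d a|a|a b].
- by rewrite fD tmulDr.
- by rewrite fZ !tmulCl !scalerA mulrC.
- by rewrite tmulCl coefZ f0 mulr0.
- by rewrite fM !tmulCl tmulZl scalerDr !scalerA mulrC.
Qed.

Lemma bider_sum n (F : 'I_n -> {poly K} -> {poly T}) :
  (forall i, bider (F i)) -> bider (fun a => \sum_(i < n) F i a).
Proof.
move=> Fbider; split=> [a b|c a|a|a b].
- by rewrite -big_split; apply: eq_bigr => i _; case: (Fbider i) => ->.
- rewrite tmulCl scaler_sumr; apply: eq_bigr => i _.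
  by case: (Fbider i) => _ -> _ _; rewrite tmulCl.
- by rewrite coef_sum big1 // => i _; case: (Fbider i).
- rewrite tmulCl scaler_sumr tmul_suml -big_split; apply: eq_bigr => i _.
  by case: (Fbider i) => _ _ _ ->; rewrite tmulCl.
Qed.

Lemma bider_delta0 : bider (fun a => ph a - (ev a)%:P).
Proof.
split=> [a b|c a|a|a b].
- by rewrite phiD evalAD polyCD opprD addrACA.
- by rewrite phiZ evalAZ polyCM mul_polyC tmulCl scalerBr.
- by rewrite coefB (coef0_phi iota sigma Phi0) coefC subrr.
- rewrite phiM // evalAM !tmulCl tmulBl tmulCl !scalerBr -!mul_polyC polyCM.
  ring.
Qed.

Lemma bider_inner (m : {poly T}) : m`_0 = 0 -> bider (fun a => tm m (ph a) - tm (ev a)%:P m).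
Proof.
move=> m0; split=> [a b|c a|a|a b].
- by rewrite phiD tmulDr evalAD polyCD tmulDl opprD addrACA.
- by rewrite phiZ tmulZr_fix // !tmulCl evalAZ -scalerA scalerBr.
- by rewrite coefB coef0_tmul m0 mul0r tmulCl coefZ m0 mulr0 subr0.
- rewrite phiM // evalAM !tmulCl tmulBl tmulZl tmulA scalerBr scalerA -!mul_polyC.
  ring.
Qed.

Lemma bider_eq0 f : bider f -> f 'X = 0 -> f =1 (fun=> 0).
Proof.
move=> [fD fZ f0 fM] fX.
have f1 : f 1 = 0.
  apply: (addrI (f 1)); rewrite addr0.
  by have := fM 1 1; rewrite mulr1 evalA1 tmul1l phi1 tmul1r => <-.
elim/poly_ind => [|p c IHp].
  by apply: (addrI (f 0)); rewrite -fD !addr0.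
by rewrite fD fM IHp fX -[c%:P]mulr1 mul_polyC fZ f1 !tmul0r tmul0l !addr0.
Qed.

Lemma bider_eqX f g : bider f -> bider g -> f 'X = g 'X -> f =1 g.
Proof.
move=> f_bider g_bider fgX a; apply/eqP; rewrite -subr_eq0; apply/eqP.
by apply: (bider_eq0 (bider_sub f_bider g_bider)); rewrite fgX subrr.
Qed.

End Biderivations.

Section DeRhamQuotient.
Variables (T : comUnitRingType) (sigma : {rmorphism T -> T}) (theta : T)
  (Phi : {poly T}) (r : nat).
Hypotheses (r_gt0 : (0 < r)%N) (size_Phi : size Phi = r.+1).
Hypothesis Phir_unit : Phi`_r \is a GRing.unit.
Local Notation tm := (tmul sigma).

Definition inner_theta (m : {poly T}) := tm m Phi - theta *: m.

Lemma inner_theta0 : inner_theta 0 = 0.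
Proof. by rewrite /inner_theta tmul0l scaler0 subr0. Qed.

Lemma inner_thetaD m m' : inner_theta (m + m') = inner_theta m + inner_theta m'.
Proof. by rewrite /inner_theta tmulDl scalerDr opprD addrACA. Qed.

Lemma coef0_inner_theta (m : {poly T}) : m`_0 = 0 -> (inner_theta m)`_0 = 0.
Proof. by move=> m0; rewrite coefB coef0_tmul coefZ m0 mul0r mulr0 subr0. Qed.

Lemma coef_inner_theta_top (m : {poly T}) k n : (size m <= k.+1)%N -> (k + r <= n)%N ->
  (inner_theta m)`_n = m`_k * twist sigma k Phi`_(n - k).
Proof.
move=> size_m le_n; have m_n : m`_n = 0.
  by apply: nth_default; apply: leq_trans size_m (leq_trans _ le_n); rewrite -addn1 leq_add2l.
by rewrite coefB (coef_tmul_top _ size_m _ le_n) ?size_Phi // coefZ m_n mulr0 subr0.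
Qed.

Lemma size_inner_theta (m : {poly T}) : m != 0 -> size (inner_theta m) = (size m + r)%N.
Proof.
rewrite -size_poly_gt0 => size_m_gt0; have [k size_m] : {k | size m = k.+1}.
  by exists (size m).-1; rewrite prednK.
have top j : (k + r <= j)%N -> (inner_theta m)`_j = m`_k * twist sigma k Phi`_(j - k).
  by apply: coef_inner_theta_top; rewrite size_m.
apply/eqP; rewrite size_m addSn eqn_leq; apply/andP; split.
  apply/leq_sizeP => j lt_j; rewrite top 1?ltnW // [Phi`__]nth_default ?rmorph0 ?mulr0 //.
  by rewrite size_Phi; lia.
rewrite ltnNge; apply/negP => /leq_sizeP/(_ (k + r)%N (leqnn _)); rewrite top // addKn.
move/(canRL (mulrK (twist_unit sigma k Phir_unit))); rewrite mul0r => m_k.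
have : lead_coef m == 0 by rewrite lead_coefE size_m m_k.
by rewrite lead_coef_eq0 -size_poly_eq0 size_m.
Qed.

Lemma inner_theta_division (e : {poly T}) :
  exists2 m : {poly T}, m`_0 = 0 & (size (e - inner_theta m)%R <= r.+1)%N.
Proof.
have [N] := ubnP (size e); elim: N e => // N IHN e size_e.
have [small_e|large_e] := leqP (size e) r.+1.
  by exists 0; rewrite ?coef0 // inner_theta0 subr0.
pose k := (size e - r.+1)%N; have k_gt0 : (0 < k)%N by rewrite subn_gt0.
pose m1 := (lead_coef e / twist sigma k Phi`_r) *: 'X^k.
have size_m1 : (size m1 <= k.+1)%N by rewrite (leq_trans (size_scale_leq _ _)) ?size_polyXn.
have size_eE : size e = (k + r).+1 by rewrite -addnS /k subnK // ltnW.
have size_e1 : (size (e - inner_theta m1)%R < size e)%N.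
  rewrite size_eE ltnS; apply/leq_sizeP => j le_j.
  rewrite coefB (coef_inner_theta_top size_m1 le_j) coefZ coefXn eqxx mulr1.
  have [<-|ne_j] := eqVneq (k + r)%N j.
    by rewrite addKn divrK ?twist_unit // lead_coefE size_eE subrr.
  have lt_j : (k + r < j)%N by rewrite ltn_neqAle ne_j.
  have e_j : e`_j = 0 by rewrite nth_default ?size_eE.
  have Phi_jk : Phi`_(j - k) = 0 by rewrite nth_default // size_Phi; lia.
  by rewrite e_j Phi_jk rmorph0 mulr0 subr0.
have [m2 m2_0 size_rem] := IHN _ (leq_trans size_e1 size_e).
exists (m1 + m2).
  by rewrite coefD m2_0 addr0 coefZ coefXn eq_sym (gtn_eqF k_gt0) mulr0.
by rewrite inner_thetaD opprD addrA.
Qed.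

Hypothesis Phi0 : Phi`_0 = theta.

(* The values [delta^i_theta] of the claimed basis of the de Rham module. *)
Definition derham_basis (i : nat) : {poly T} :=
  if i == 0%N then Phi - theta%:P else 'X^i.

Lemma coef_derham_comb (c : nat -> T) n :
  (\sum_(i < r) c i *: derham_basis i)`_n =
    c 0%N * (Phi - theta%:P)`_n + (if (0 < n < r)%N then c n else 0).
Proof.
case: r r_gt0 => // r' _; rewrite big_ord_recl [LHS]coefD [in LHS]coefZ; congr (_ + _).
rewrite coef_sum (eq_bigr (fun i : 'I_r' => if n == i.+1 then c n else 0)); last first.
  move=> i _; rewrite /derham_basis /= coefZ coefXn.
  by case: eqP => [->|]; rewrite ?mulr1 ?mulr0.
case: n => [|n]; first by rewrite big1.
rewrite -big_mkcond; under eq_bigl => i do rewrite eqSS eq_sym.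
by rewrite (big_ord1_eq _ (fun=> c n.+1)).
Qed.

Lemma size_derham_comb (c : nat -> T) :
  (size (\sum_(i < r) c i *: derham_basis i)%R <= r.+1)%N.
Proof.
apply/leq_sizeP => n lt_r_n; rewrite coef_derham_comb coefB coefC.
have n_gt0 : (0 < n)%N := leq_trans r_gt0 (ltnW lt_r_n).
rewrite nth_default ?size_Phi // (leq_gtF (ltnW lt_r_n)) andbF (gtn_eqF n_gt0).
by rewrite subr0 mulr0 addr0.
Qed.

Lemma derham_comb_span (R : {poly T}) : R`_0 = 0 -> (size R <= r.+1)%N ->
  exists c : nat -> T, R = \sum_(i < r) c i *: derham_basis i.
Proof.
move=> R0 size_R; pose c0 := R`_r / Phi`_r.
pose c i := if i == 0%N then c0 else R`_i - c0 * Phi`_i.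
exists c; apply/polyP => n; rewrite coef_derham_comb /c /= coefB coefC.
have [->|n_gt0] := posnP n; first by rewrite Phi0 subrr mulr0 addr0.
rewrite subr0 /=.
have [lt_n_r|le_r_n] := ltnP n r; first by rewrite addrC subrK.
have [<-|lt_r_n] := eqVneq r n; first by rewrite addr0 /c0 divrK.
have {}lt_r_n : (r < n)%N by rewrite ltn_neqAle lt_r_n.
by rewrite !nth_default ?size_Phi ?mulr0 ?addr0 //; apply: leq_trans size_R _.
Qed.

Lemma derham_comb_inner_eq0 (c : nat -> T) (m : {poly T}) : m`_0 = 0 ->
  \sum_(i < r) c i *: derham_basis i = inner_theta m -> forall i, (i < r)%N -> c i = 0.
Proof.
move=> m0 combE.
have m_eq0 : m = 0.
  apply/eqP/negPn/negP => m_neq0.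
  have size_m : (1 < size m)%N.
    by rewrite ltnNge; apply: contra m_neq0 => /size1_polyC ->; rewrite m0.
  have := size_derham_comb c.
  by rewrite combE size_inner_theta // -(add1n r) leq_add2r leqNgt size_m.
move: combE; rewrite m_eq0 inner_theta0 => /polyP coef_comb.
have c0 : c 0%N = 0.
  have := coef_comb r; rewrite coef_derham_comb coefB coefC (gtn_eqF r_gt0) subr0.
  rewrite ltnn andbF addr0 coef0 => /(canRL (mulrK Phir_unit)).
  by rewrite mul0r.
case=> [|i] lt_i; first exact: c0.
by have := coef_comb i.+1; rewrite coef_derham_comb c0 mul0r add0r lt_i coef0.
Qed.

End DeRhamQuotient.

Theorem corollary5p4 (K : comRingType) (T : comUnitRingType)
  (iota : {rmorphism K -> T}) (sigma : {rmorphism T -> T})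
  (theta : T) (r : nat) (Phi : {poly T})
  (delta : nat -> {poly K} -> {poly T}) :
  (forall c : K, sigma (iota c) = iota c) ->
  (0 < r)%N ->
  Phi`_0 = theta ->
  size Phi = r.+1 ->
  lead_coef Phi \is a GRing.unit ->
  (forall a, delta 0%N a = phi iota sigma Phi a - (evalA iota theta a)%:P) ->
  (forall i, (0 < i < r)%N ->
     is_bider iota sigma theta Phi (delta i) /\ delta i 'X = 'X^i) ->
  [/\ is_bider iota sigma theta Phi (delta 0%N),
      (forall eta, is_bider iota sigma theta Phi eta ->
         exists c : nat -> T,
           is_strictly_inner iota sigma theta Phi
             (fun a => eta a - \sum_(i < r) tmul sigma (c i)%:P (delta i a)))
    & (forall c : nat -> T,
         is_strictly_inner iota sigma theta Phi
           (fun a => \sum_(i < r) tmul sigma (c i)%:P (delta i a)) ->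
         forall i, (i < r)%N -> c i = 0)].
Proof.
move=> sigma_iota r_gt0 Phi0 size_Phi lc_unit delta0E deltaE.
have Phir_unit : Phi`_r \is a GRing.unit by rewrite lead_coefE size_Phi in lc_unit.
have delta_bider i : (i < r)%N -> is_bider iota sigma theta Phi (delta i).
  case: i => [|i] lt_i; last by case: (deltaE i.+1 lt_i).
  exact: bider_ext (fun a => esym (delta0E a)) (bider_delta0 sigma_iota Phi0).
have combX (c : nat -> T) : \sum_(i < r) tmul sigma (c i)%:P (delta i 'X) =
    \sum_(i < r) c i *: derham_basis theta Phi i.
  apply: eq_bigr => -[[|i] lt_i] _; rewrite tmulCl; last by case: (deltaE i.+1 lt_i) => _ ->.
  by rewrite delta0E phiX evalAX.
split=> [|eta eta_bider|c [m [m0 innerE]]]; first exact: delta_bider.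
- have [m m0 size_rem] := inner_theta_division sigma theta r_gt0 size_Phi Phir_unit (eta 'X).
  have rem0 : (eta 'X - inner_theta sigma theta Phi m)`_0 = 0.
    by case: eta_bider => _ _ eta0 _; rewrite coefB eta0 coef0_inner_theta ?subr0.
  have [c remE] := derham_comb_span r_gt0 size_Phi Phir_unit Phi0 rem0 size_rem.
  exists c, m; split=> //; apply: bider_eqX.
  + apply: bider_sub eta_bider _; apply: bider_sum => i.
    exact/bider_scale/delta_bider.
  + exact: bider_inner.
  + by rewrite combX -remE phiX evalAX tmulCl opprB addrC subrK.
- have combE : \sum_(i < r) c i *: derham_basis theta Phi i = inner_theta sigma theta Phi m.
    by rewrite -combX innerE phiX evalAX tmulCl.
  exact: (derham_comb_inner_eq0 r_gt0 size_Phi Phir_unit m0 combE).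
Qed.
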